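(* Let $k\subset L$ be an FCP radicial (purely inseparable) field extension, with $p:=\mathrm{c}(k)$ and $[L:k]=p^n$. Then: (1) $\mathcal S[k,L]=\{x\in L\mid x^p\in k\}$. (2) If $k\subset L$ has FIP, then the Loewy series of $k\subset L$ is $[k,L]$ (i.e. its terms are exactly the elements of $[k,L]$), and $\pounds[k,L]=n$.
   Context: $\mathrm{c}(k)$ is the characteristic of $k$. $[k,L]$ is the lattice of intermediate fields; FCP means every chain in $[k,L]$ is finite, FIP means $[k,L]$ is finite. $K\subset K'$ is minimal if $[K,K']=\{K,K'\}$; an atom of $[k,L]$ is $K$ with $k\subset K$ minimal; the socle $\mathcal S[k,L]$ is the compositum of all atoms. Loewy series: $S_0=k$, $S_{i+1}=\mathcal S[S_i,L]$ while $S_i\neq L$; $\pounds[k,L]$ is the least $n$ with $S_n=L$. *)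

From HB Require Import structures.
From mathcomp Require Import all_boot all_order all_algebra all_field.
Set Implicit Arguments. Unset Strict Implicit. Unset Printing Implicit Defensive.
Import GRing.Theory.
Local Open Scope ring_scope.

Section IntermediateFields.
Variables (F : fieldType) (L : fieldExtType F).

Definition intermediate (K E : {subfield L}) : Prop := (K <= E)%VS.

Definition minimal_ext (K K' : {subfield L}) : Prop :=
  (K <= K')%VS /\ K != K' /\
  forall M : {subfield L}, (K <= M)%VS -> (M <= K')%VS -> M = K \/ M = K'.

Definition atom (K A : {subfield L}) : Prop := minimal_ext K A.

(* S is the socle S[K,L]: the compositum of all atoms of [K,L], i.e. the
   least intermediate field of [K,L] containing every atom
   (it equals K when there is no atom). *)
Definition is_socle (K S : {subfield L}) : Prop :=
  (K <= S)%VS /\ (forall A, atom K A -> (A <= S)%VS) /\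
  (forall M : {subfield L}, (K <= M)%VS -> (forall A, atom K A -> (A <= M)%VS) ->
     (S <= M)%VS).

Definition FCP (K : {subfield L}) : Prop :=
  forall C : {subfield L} -> Prop,
    (forall E, C E -> (K <= E)%VS) ->
    (forall E E', C E -> C E' -> (E <= E')%VS \/ (E' <= E)%VS) ->
    exists s : seq {subfield L}, forall E, C E -> E \in s.

Definition FIP (K : {subfield L}) : Prop :=
  exists s : seq {subfield L}, forall E : {subfield L}, (K <= E)%VS -> E \in s.

Definition loewy_series (K : {subfield L}) (S : nat -> {subfield L}) : Prop :=
  S 0%N = K /\
  (forall i, (S i :> {vspace L}) != fullv -> is_socle (S i) (S i.+1)) /\
  (forall i, (S i :> {vspace L}) = fullv -> S i.+1 = S i).

Definition loewy_length (S : nat -> {subfield L}) (n : nat) : Prop :=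
  (S n :> {vspace L}) = fullv /\ forall i, (i < n)%N -> (S i :> {vspace L}) != fullv.

End IntermediateFields.

(* Write R(E) = frob_root E := {x | x ^+ p \in E}; in characteristic p it is an
   intermediate field of L/E.  When L/E is purely inseparable, every atom of
   [E, L] contains some y with y \notin E and y ^+ p \in E, hence equals E(y), an
   extension of prime degree p; conversely every such E(y) is an atom, so the
   socle is R(E).
   If [E, L] is finite, R(E) is already E(y) for any single such y: for b in
   R(E) outside E(y), the fields E(y + c b), c \in E, have degree at most p over
   E, so two of them coincide and contain E(y, b), of degree p^2.  This needs E
   infinite, which holds because a finite field is perfect while y \notin E.
   Hence [R(E) : E] = p and R(E) lies in every M \in [E, L] other than E, so the
   iterates R^i(K) exhaust [K, L] as a chain of degrees p^i reaching L at i = n. *)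

From HB Require Import structures.
From mathcomp Require Import all_boot all_order all_algebra all_field.
From Stdlib Require Import Classical ClassicalEpsilon.
From mathcomp Require Import zify.
Set Implicit Arguments. Unset Strict Implicit. Unset Printing Implicit Defensive.
Import GRing.Theory.
Local Open Scope ring_scope.

Lemma preimage_seq (T U : eqType) (A : pred T) (f : T -> U) :
  {in A &, injective f} ->
  forall s : seq U, exists sA : seq T, forall x, x \in A -> f x \in s -> x \in sA.
Proof.
move=> f_inj; elim=> [|u s [sA sAP]]; first by exists [::].
have [[x0 x0A fx0] | no_pre] := classic (exists2 x0, x0 \in A & f x0 = u).
  exists (x0 :: sA) => x xA; rewrite !inE => /orP[/eqP fx | /(sAP x xA)->].
    by rewrite (f_inj x x0) ?eqxx ?fx0.
  exact: orbT.
exists sA => x xA; rewrite inE => /orP[/eqP fx | /(sAP x xA)//].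
by case: no_pre; exists x.
Qed.

Lemma vspace_of_pred (K : fieldType) (vT : vectType K) (P : pred vT) :
  P 0 -> (forall a u v, P u -> P v -> P (a *: u + v)) ->
  exists V : {vspace vT}, forall v, (v \in V) = P v.
Proof.
move=> P0 P_lin.
suff PV : forall V : {vspace vT}, {subset V <= P} ->
    exists W : {vspace vT}, forall v, (v \in W) = P v.
  by apply: (PV 0%VS) => v; rewrite memv0 => /eqP->.
move=> V; have [m] := ubnP (\dim {:vT} - \dim V).
elim: m V => // m IHm V codimV sVP.
have [[x Px xV] | sPV] := classic (exists2 x, P x & x \notin V); last first.
  exists V => v; apply/idP/idP => [/sVP // | Pv].
  by apply/negPn/negP => vV; apply: sPV; exists v.
apply: (IHm (V + <[x]>)%VS).
  have ltVVx : (\dim V < \dim (V + <[x]>))%N.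
    by rewrite (ltn_leqif (dimv_leqif_sup (addvSl _ _))) subv_add subvv -memvE.
  by have := dimvS (subvf (V + <[x]>)); lia.
move=> w /memv_addP[u uV [v /vlineP[a ->] ->]].
by rewrite addrC; apply: P_lin; last exact: sVP.
Qed.

Section SubfieldLattice.
Variables (F : fieldType) (L : fieldExtType F).
Implicit Types K E M : {subfield L}.

Lemma FIPS K E : (K <= E)%VS -> FIP K -> FIP E.
Proof. by move=> KE [s sP]; exists s => M EM; apply/sP/(subv_trans KE). Qed.

Lemma purely_inseparableSl K E M :
  (K <= E)%VS -> purely_inseparable K M -> purely_inseparable E M.
Proof.
move=> KE /purely_inseparableP insepKM; apply/purely_inseparableP => x xM.
exact/(sub_inseparable KE)/insepKM.
Qed.

Lemma purely_inseparableSr K E M :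
  (E <= M)%VS -> purely_inseparable K M -> purely_inseparable K E.
Proof.
move=> /subvP EM /purely_inseparableP insepKM.
by apply/purely_inseparableP => x /EM/insepKM.
Qed.

Lemma minimal_ext_prime K M : (K <= M)%VS -> prime (\dim_K M) -> minimal_ext K M.
Proof.
move=> KM prM; split; [exact: KM | split].
  by apply: contraTneq (prime_gt1 prM) => <-; rewrite divnn adim_gt0.
move=> N KN NM.
have dimM : \dim M = (\dim_N M * \dim_K N * \dim K)%N.
  by rewrite -mulnA -(dim_sup_field KN) -(dim_sup_field NM).
have dimKM : \dim_K M = (\dim_N M * \dim_K N)%N by rewrite {1}dimM mulnK ?adim_gt0.
have [_ /(_ (\dim_K N))] := primeP prM.
rewrite {1}dimKM => /(_ (dvdn_mull _ (dvdnn _)))/orP[/eqP dimKN | /eqP dimKN].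
  left; apply/val_inj/eqP; rewrite eq_sym eqEdim KN.
  by rewrite (dim_sup_field KN) dimKN mul1n; apply: leqnn.
right; apply/val_inj/eqP; rewrite eqEdim NM.
by rewrite (dim_sup_field KN) dimKN -(dim_sup_field KM); apply: leqnn.
Qed.

End SubfieldLattice.

Section FrobeniusRoot.
Variables (F : fieldType) (L : fieldExtType F) (p : nat).
Hypothesis pcharLp : p \in [pchar L].
Implicit Types E M : {subfield L}.

Let p_prime : prime p := pcharf_prime pcharLp.

Lemma exprD_pchar (x y : L) : (x + y) ^+ p = x ^+ p + y ^+ p.
Proof. exact: (rmorphD (pFrobenius_aut pcharLp)). Qed.

Lemma frob_root_exists E :
  exists T : {subfield L}, forall x, (x \in T) = (x ^+ p \in E).
Proof.
have [V memV] : exists V : {vspace L}, forall x, (x \in V) = (x ^+ p \in E).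
  apply: (@vspace_of_pred F L (fun x : L => x ^+ p \in E)) => [|a u v Eu Ev].
    by rewrite expr0n gtn_eqF ?prime_gt0 ?mem0v.
  by rewrite exprD_pchar exprZn rpredD ?memvZ.
have algV : is_aspace V.
  apply/andP; split; first by apply: has_algid1; rewrite memV expr1n mem1v.
  by apply/prodvP => u v; rewrite !memV exprMn; apply: memvM.
by exists (ASpace algV) => x; rewrite -memV.
Qed.

Definition frob_root E : {subfield L} :=
  proj1_sig (constructive_indefinite_description _ (frob_root_exists E)).

Lemma mem_frob_root E x : (x \in frob_root E) = (x ^+ p \in E).
Proof. exact: (proj2_sig (constructive_indefinite_description _ (frob_root_exists E))). Qed.

Lemma sub_frob_root E : (E <= frob_root E)%VS.
Proof. by apply/subvP => x Ex; rewrite mem_frob_root rpredX. Qed.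

Lemma frob_root_fullv E : (E : {vspace L}) = fullv -> frob_root E = E.
Proof.
by move=> Ef; apply/val_inj/subv_anti; rewrite sub_frob_root andbT /= Ef subvf.
Qed.

Lemma adjoin_degree_le_pchar E y : y ^+ p \in E -> (adjoin_degree E y <= p)%N.
Proof.
move=> Eyp; have nz_Xp : 'X^p - (y ^+ p)%:P != 0 :> {poly L}.
  by rewrite -size_poly_eq0 size_XnsubC ?prime_gt0.
have /(dvdp_leq nz_Xp) : minPoly E y %| 'X^p - (y ^+ p)%:P.
  by rewrite minPoly_dvdp ?polyOverXnsubC // rootE !hornerE subrr.
by rewrite size_minPoly size_XnsubC ?prime_gt0.
Qed.

Lemma adjoin_degree_pchar E y :
  y ^+ p \in E -> y \notin E -> adjoin_degree E y = p.
Proof.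
move=> Eyp Ey; apply/anti_leq; rewrite adjoin_degree_le_pchar //=.
have : ~~ separable_element E y.
  by rewrite (pcharf_p_separable _ _ 0 pcharLp) expn1 (Fadjoin_idP Eyp).
case/separablePn_pchar => q + [g _].
rewrite (pcharf_eq pcharLp) => /eqnP-> minPoly_g.
have := size_comp_poly g 'X^p; rewrite -minPoly_g size_minPoly size_polyXn /=.
move=> [deg_g]; apply: dvdn_leq; first by [].
by rewrite deg_g dvdn_mull.
Qed.

Lemma dim_adjoin_pchar E y :
  y ^+ p \in E -> y \notin E -> \dim <<E; y>> = (p * \dim E)%N.
Proof. by move=> Eyp Ey; rewrite dim_Fadjoin adjoin_degree_pchar. Qed.

Lemma atom_adjoin_pchar E y : y ^+ p \in E -> y \notin E -> atom E <<E; y>>%AS.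
Proof.
move=> Eyp Ey; apply: minimal_ext_prime; first exact: subv_adjoin.
by rewrite -adjoin_degreeE adjoin_degree_pchar.
Qed.

Lemma exists_pchar_root E M :
  purely_inseparable E M -> ~~ (M <= E)%VS ->
  exists2 y, y \in M & (y \notin E) && (y ^+ p \in E).
Proof.
move=> /purely_inseparableP insepEM /subvPn[x Mx Ex].
have /purely_inseparable_elementP_pchar[q pcharq Exq] := insepEM x Mx.
have /p_natP[k qpk] : p.-nat q by rewrite -(eq_pnat _ (pcharf_eq pcharLp)).
rewrite {q pcharq}qpk in Exq; elim: k Exq => [|k IHk] Expk.
  by rewrite expr1 (negPf Ex) in Expk.
have [/IHk // | Ey] := boolP (x ^+ (p ^ k) \in E).
by exists (x ^+ (p ^ k)); rewrite ?Ey -?exprM -?expnSr // rpredX.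
Qed.

Lemma is_socle_frob_root E : purely_inseparable E fullv -> is_socle E (frob_root E).
Proof.
move=> insepE; split; first exact: sub_frob_root.
split=> [A [EA [EneA minA]] | M EM atomsM].
  have AnE : ~~ (A <= E)%VS.
    by apply: contra EneA => AE; apply/eqP/val_inj/subv_anti; rewrite EA AE.
  have [y Ay /andP[Ey Eyp]] :=
    exists_pchar_root (purely_inseparableSr (subvf A) insepE) AnE.
  have [EyE | <-] := minA _ (subv_adjoin E y) (introT FadjoinP (conj EA Ay)).
    by move: Ey; rewrite -EyE memv_adjoin.
  by apply/FadjoinP; rewrite sub_frob_root mem_frob_root.
apply/subvP => x; rewrite mem_frob_root => Exp.
have [/(subvP EM) // | Ex] := boolP (x \in E).
exact/(subvP (atomsM _ (atom_adjoin_pchar Exp Ex)))/memv_adjoin.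
Qed.

Lemma pchar_root_mem_finite E (s : seq L) y :
  {subset E <= s} -> y ^+ p \in E -> y \in E.
Proof.
move=> sEs Eyp; pose sE := [seq x <- undup s | x \in E].
have frob_inj : injective (fun x : L => x ^+ p).
  exact: fmorph_inj (pFrobenius_aut pcharLp).
have frob_sE : {subset [seq x ^+ p | x <- sE] <= sE}.
  move=> _ /mapP[x + ->]; rewrite mem_filter => /andP[Ex _].
  by rewrite mem_filter rpredX // mem_undup sEs ?rpredX.
have uniq_frob : uniq [seq x ^+ p | x <- sE].
  by rewrite (map_inj_uniq frob_inj) filter_uniq ?undup_uniq.
have [_ sE_frob] := uniq_min_size uniq_frob frob_sE (eq_leq (esym (size_map _ _))).
have : y ^+ p \in sE by rewrite mem_filter Eyp mem_undup sEs.
by rewrite -sE_frob => /mapP[z]; rewrite mem_filter => /andP[Ez _] /frob_inj->.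
Qed.

Lemma adjoin_collision E y b :
  FIP E -> y ^+ p \in E -> y \notin E ->
  exists c d, [/\ c \in E, d \in E, c != d & <<E; y + c * b>>%AS = <<E; y + d * b>>%AS].
Proof.
move=> [s sP] Eyp Ey; apply: NNPP => no_collision; move/negP: Ey; apply.
pose f c := <<E; y + c * b>>%AS.
have f_inj : {in E &, injective f}.
  move=> c d Ec Ed fcd; apply/eqP; apply: contraT => ncd.
  by exfalso; apply: no_collision; exists c, d; split.
have [sE sEP] := preimage_seq f_inj s.
apply: (pchar_root_mem_finite (s := sE)) Eyp => c Ec.
by apply: sEP => //; apply/sP/subv_adjoin.
Qed.

Lemma mem_adjoin_pchar_root E y b :
  FIP E -> y ^+ p \in E -> b ^+ p \in E -> y \notin E -> b \in <<E; y>>%VS.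
Proof.
move=> fipE Eyp Ebp Ey; apply: contraT => bNEy.
have [c [d [Ec Ed ncd fcd]]] := adjoin_collision b fipE Eyp Ey.
pose M := <<E; y + c * b>>%AS; have EM : (E <= M)%VS := subv_adjoin _ _.
have cbM : y + c * b \in M := memv_adjoin _ _.
have dbM : y + d * b \in M by rewrite /M fcd memv_adjoin.
have bM : b \in M.
  have cdM : c - d \in M by rewrite rpredB ?(subvP EM).
  rewrite -(fpredMl b cdM) ?subr_eq0 //.
  have -> : (c - d) * b = (y + c * b) - (y + d * b).
    by rewrite opprD addrACA subrr add0r mulrBl.
  exact: rpredB.
have yM : y \in M.
  have cbM' : c * b \in M by rewrite rpredM //; apply: (subvP EM).
  by rewrite -(addrK (c * b) y) rpredB.
have EybM : (<<<<E; y>>%AS; b>> <= M)%VS.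
  by apply/FadjoinP; split=> //; apply/FadjoinP.
have dimM : (\dim M <= p * \dim E)%N.
  rewrite dim_Fadjoin leq_mul2r adjoin_degree_le_pchar ?orbT //.
  by rewrite exprD_pchar exprMn rpredD // rpredM // rpredX.
have dimEy : \dim <<E; y>>%AS = (p * \dim E)%N := dim_adjoin_pchar Eyp Ey.
have := leq_trans (dimvS EybM) dimM.
rewrite dim_adjoin_pchar ?dimEy //; last exact: (subvP (subv_adjoin E y)).
by rewrite leqNgt ltn_Pmull ?prime_gt1 // muln_gt0 prime_gt0 ?adim_gt0.
Qed.

Lemma frob_root_adjoin E y :
  FIP E -> y ^+ p \in E -> y \notin E -> frob_root E = <<E; y>>%AS.
Proof.
move=> fipE Eyp Ey; apply/val_inj/subv_anti/andP; split.
  by apply/subvP => b; rewrite mem_frob_root => Ebp; apply: mem_adjoin_pchar_root.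
by apply/FadjoinP; rewrite sub_frob_root mem_frob_root.
Qed.

Lemma frob_root_subv E M :
  FIP E -> purely_inseparable E M -> (E <= M)%VS -> ~~ (M <= E)%VS ->
  (frob_root E <= M)%VS.
Proof.
move=> fipE insepEM EM MnE.
have [y My /andP[Ey Eyp]] := exists_pchar_root insepEM MnE.
by rewrite (frob_root_adjoin fipE Eyp Ey); apply/FadjoinP.
Qed.

Lemma dim_frob_root E :
  FIP E -> purely_inseparable E fullv -> (E : {vspace L}) != fullv ->
  \dim (frob_root E) = (p * \dim E)%N.
Proof.
move=> fipE insepE EnL.
have LnE : ~~ (fullv <= E)%VS by apply: contra EnL => LE; rewrite eqEsubv subvf.
have [y _ /andP[Ey Eyp]] := exists_pchar_root (M := {:L}%AS) insepE LnE.
by rewrite (frob_root_adjoin fipE Eyp Ey) dim_adjoin_pchar.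
Qed.

Section IteratedFrobeniusRoot.
Variable K : {subfield L}.
Hypotheses (fipK : FIP K) (insepK : purely_inseparable K fullv).
Local Notation S i := (iter i frob_root K).

Lemma sub_iter_frob_root i : (K <= S i)%VS.
Proof. by elim: i => [|i IHi]; [exact: subvv | exact: subv_trans IHi (sub_frob_root _)]. Qed.

Lemma purely_inseparable_iter_frob_root i : purely_inseparable (S i) fullv.
Proof. exact: purely_inseparableSl (sub_iter_frob_root i) insepK. Qed.

Lemma FIP_iter_frob_root i : FIP (S i).
Proof. exact: FIPS (sub_iter_frob_root i) fipK. Qed.

Lemma loewy_series_iter_frob_root : loewy_series K (fun i => S i).
Proof.
split=> //; split=> i; last exact: frob_root_fullv.
by move=> _; apply/is_socle_frob_root/purely_inseparable_iter_frob_root.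
Qed.

Lemma iter_frob_root_subv_or_eq E i :
  (K <= E)%VS -> (exists j, E = S j) \/ (S i <= E)%VS.
Proof.
move=> KE; elim: i => [|i [ex_j | SiE]]; [by right | by left | ].
have [ESi | ESin] := boolP (E <= S i)%VS.
  by left; exists i; apply/val_inj/subv_anti; rewrite ESi SiE.
right; apply: frob_root_subv ESin => //; first exact: FIP_iter_frob_root.
exact: purely_inseparableSr (subvf E) (purely_inseparable_iter_frob_root i).
Qed.

Section DegreePower.
Variable n : nat.
Hypothesis dimKL : \dim_K (fullv : {vspace L}) = (p ^ n)%N.

Let dimL : \dim (fullv : {vspace L}) = (p ^ n * \dim K)%N.
Proof. by rewrite -dimKL divnK // field_dimS // subvf. Qed.

Let neq_fullv_dim E i :
  (i < n)%N -> \dim E = (p ^ i * \dim K)%N -> (E : {vspace L}) != fullv.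
Proof.
move=> lt_in dimE; have : (\dim E < \dim (fullv : {vspace L}))%N.
  by rewrite dimE dimL ltn_pmul2r ?adim_gt0 // ltn_exp2l ?prime_gt1.
by apply: contraTneq => ->; rewrite ltnn.
Qed.

Lemma dim_iter_frob_root i : (i <= n)%N -> \dim (S i) = (p ^ i * \dim K)%N.
Proof.
elim: i => [|i IHi] lt_in; first by rewrite mul1n.
have dimSi := IHi (ltnW lt_in).
rewrite /= dim_frob_root ?dimSi ?expnS ?mulnA ?(neq_fullv_dim lt_in) //.
  exact: FIP_iter_frob_root.
exact: purely_inseparable_iter_frob_root.
Qed.

Lemma iter_frob_root_neq_fullv i : (i < n)%N -> (S i : {vspace L}) != fullv.
Proof. by move=> lt_in; rewrite (neq_fullv_dim lt_in) ?dim_iter_frob_root 1?ltnW. Qed.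

Lemma iter_frob_root_eq_fullv : (S n : {vspace L}) = fullv.
Proof. by apply/eqP; rewrite eqEdim subvf dimL dim_iter_frob_root ?leqnn. Qed.

Lemma intermediate_iter_frob_root E : (K <= E)%VS -> exists i, E = S i.
Proof.
move=> KE; have [// | SnE] := iter_frob_root_subv_or_eq n KE.
by exists n; apply/val_inj/subv_anti; rewrite SnE andbT /= iter_frob_root_eq_fullv subvf.
Qed.

End DegreePower.

End IteratedFrobeniusRoot.
End FrobeniusRoot.

Theorem proposition9p31 (F : fieldType) (L : fieldExtType F)
  (K : {subfield L}) (p n : nat) :
  FCP K ->
  purely_inseparable K fullv ->
  p \in [pchar L] ->
  \dim_K (fullv : {vspace L}) = (p ^ n)%N ->
  (exists S : {subfield L}, is_socle K S /\ forall x : L, (x \in S) = (x ^+ p \in K))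
  /\
  (FIP K ->
   exists S : nat -> {subfield L},
     loewy_series K S /\
     (forall E : {subfield L}, (K <= E)%VS <-> exists i, E = S i) /\
     loewy_length S n).
Proof.
move=> _ insepK pcharLp dimKL; split.
  exists (frob_root pcharLp K); split; last exact: mem_frob_root.
  exact: is_socle_frob_root.
move=> fipK; exists (fun i => iter i (frob_root pcharLp) K); split.
  exact: loewy_series_iter_frob_root.
split=> [E | ].
  split=> [/(intermediate_iter_frob_root pcharLp fipK insepK dimKL) // | [i ->]].
  exact: sub_iter_frob_root.
split; first exact: iter_frob_root_eq_fullv.
by move=> i; apply: iter_frob_root_neq_fullv.
Qed.
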